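(* Consider the following networked control setting. Let $f_p:\mathbb{R}^{n_p}\times\mathbb{R}^{m_p}\to\mathbb{R}^{n_p}$ with $f_p(0,0)=0$, a closed set $\mathbb{X}_p\subseteq\mathbb{R}^{n_p}$ and a compact set $\mathbb{U}_p\subseteq\mathbb{R}^{m_p}$, both containing the origin, $Q,R>0$, and integers $g\in\mathbb{I}_{\geq1}$, $c\in\mathbb{I}_{\geq g}$, $b\in\mathbb{I}_{\geq c}$ with $q:=\lceil c/g\rceil\geq2$. The overall state is $x=(x_p,u_s,\beta)\in\mathbb{X}:=\mathbb{X}_p\times\mathbb{U}_p\times\mathbb{I}_{[0,b]}$, the input $u=(u_c,\gamma,\delta)\in\mathbb{U}:=\mathbb{U}_p\times\{(\gamma,\delta)\in\{0,1\}^2:\gamma+\delta\leq1\}$, and the dynamics are $x(k+1)=f(x(k),u(k))$ with $$f(x,u)=\big(f_p(x_p,(\gamma+\delta)u_c+(1-\gamma-\delta)u_s),\ (\gamma+\delta)u_c+(1-\gamma-\delta)u_s,\ \min\{\beta+(1-\delta)g-\gamma c,b\}\big).$$ For $\psi>0$ the stage cost is $\ell(x,u)=\|x_p\|_Q^2+(\gamma+\delta)\|u_c\|_R^2+(1-\gamma-\delta)\|u_s\|_R^2+\psi(b^2-\beta^2)$. For $u_c\in\mathbb{U}_p$ define $f_{p,0}(x_p,u_c):=x_p$, $f_{p,i}(x_p,u_c):=f_p(f_{p,i-1}(x_p,u_c),u_c)$. Assume: (A1) there exist a closed set $\mathbb{X}_{f,p}\subseteq\mathbb{X}_p$ containing the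 origin and $k_p:\mathbb{X}_{f,p}\to\mathbb{U}_p$ such that for all $x_p\in\mathbb{X}_{f,p}$: $f_{p,i}(x_p,k_p(x_p))\in\mathbb{X}_p$ for all $i\in\mathbb{I}_{[1,q-1]}$ and $f_{p,q}(x_p,k_p(x_p))\in\mathbb{X}_{f,p}$; moreover $(0,0)\in\operatorname{int}(\mathbb{X}_{f,p}\times\mathbb{U}_p)$; (A2) there is a continuous positive definite $V_{f,p}:\mathbb{X}_{f,p}\to\mathbb{R}$ with, for all $x_p\in\mathbb{X}_{f,p}$, $V_{f,p}(f_{p,q}(x_p,k_p(x_p)))-V_{f,p}(x_p)\leq -q\|k_p(x_p)\|_R^2-\sum_{i=0}^{q-1}\|f_{p,i}(x_p,k_p(x_p))\|_Q^2$; (A4) $\sigma>0$ satisfies $\sigma\geq\psi\big(qb^2-\tfrac16g^2(q-1)(q-2)(2q-3)\big)$. Let $V_f(x):=V_{f,p}(x_p)+\sigma(b^2-\beta^2)$ and $\mathbb{X}_f:=\mathbb{X}_{f,p}\times\mathbb{U}_p\times\mathbb{I}_{[0,b]}$. Fix $r\in\mathbb{I}_{\geq1}$, $M:=rq$, and $N:=JM$ with $J\in\mathbb{I}_{\geq1}$. The closed loop is generated by the rollout scheme: at each $k=jM$, $j\in\mathbb{I}_{\geq0}$, solve $\mathbb{P}(x(jM))$: minimize $\sum_{i=0}^{N-1}\ell(x(i|jM),u(i|jM))+V_f(x(N|jM))$ over $u(0|jM),\dots,u(N-1|jM)$ subject to $x(i+1|jM)=f(x(i|jM),u(i|jM))$,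 $x(i|jM)\in\mathbb{X}$, $u(i|jM)\in\mathbb{U}$ for $i\in\mathbb{I}_{[0,N-1]}$, $x(0|jM)=x(jM)$, $x(N|jM)\in\mathbb{X}_f$, with optimizer $u^*(\cdot|jM)$, and apply $u(jM+i)=u^*(i|jM)$ for $i\in\mathbb{I}_{[0,M-1]}$. Then, if $\mathbb{P}(x(0))$ is feasible, $\mathbb{P}(x(jM))$ is feasible for all $j\in\mathbb{I}_{\geq0}$ and the point $(0,0,b)$ is asymptotically stable for the closed loop.
   Context: $\mathbb{I}$ denotes the integers, $\mathbb{I}_{[a,b]}:=\mathbb{I}\cap[a,b]$, $\mathbb{I}_{\geq a}:=\mathbb{I}\cap[a,\infty)$, $\|v\|_A^2:=v^TAv$, $A>0$ means positive definite, and int denotes the interior. Here $x_p$ is the plant state, $u_s$ the last applied (held) input, $\beta$ the token level of a token bucket (size $b$, rate $g$, cost $c$); $\gamma=1$ is a transmission over the token-bucket-constrained network and $\delta=1$ a transmission over a direct link which consumes no tokens and during which no tokens are added. ''Feasible'' means the constraint set is nonempty. *)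

From mathcomp Require Import all_boot all_order all_algebra.
From mathcomp Require Import all_classical all_reals all_analysis.
Import Order.TTheory GRing.Theory Num.Theory.
Import numFieldNormedType.Exports.
Local Open Scope ring_scope.
Local Open Scope classical_set_scope.

Definition ceil_div (c g : nat) : nat := `|Num.ceil ((c%:Q) / (g%:Q))|%N.

Set Implicit Arguments.
Unset Strict Implicit.

Section Setting.
Variables (R : realType) (np mp : nat).

Definition qf {n} (Q : 'M[R]_n) (v : 'rV[R]_n) : R := (v *m Q *m v^T) 0 0.

Definition posdef {n} (Q : 'M[R]_n) : Prop :=
  forall v : 'rV[R]_n, v != 0 -> 0 < qf Q v.

Definition state := ('rV[R]_np * 'rV[R]_mp * int)%type.
Definition input := ('rV[R]_mp * bool * bool)%type.

Definition bR (b : bool) : R := (nat_of_bool b)%:R.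

Definition fp_iter (fp : 'rV[R]_np -> 'rV[R]_mp -> 'rV[R]_np) (i : nat)
  (xp : 'rV[R]_np) (uc : 'rV[R]_mp) : 'rV[R]_np :=
  iter i (fun z => fp z uc) xp.

Definition sys_f (fp : 'rV[R]_np -> 'rV[R]_mp -> 'rV[R]_np) (g c b : nat)
  (x : state) (u : input) : state :=
  let: (xp, us, beta) := x in
  let: (uc, gam, del) := u in
  let ua := (bR gam + bR del) *: uc + (1 - bR gam - bR del) *: us in
  (fp xp ua, ua,
   Num.min (beta + (1 - (nat_of_bool del)%:Z) * g%:Z - (nat_of_bool gam)%:Z * c%:Z)
           b%:Z).

Definition stage (Q : 'M[R]_np) (Rm : 'M[R]_mp) (psi : R) (b : nat)
  (x : state) (u : input) : R :=
  let: (xp, us, beta) := x in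
  let: (uc, gam, del) := u in
  qf Q xp + (bR gam + bR del) * qf Rm uc + (1 - bR gam - bR del) * qf Rm us
  + psi * ((b%:R) ^+ 2 - (beta%:~R) ^+ 2).

Definition Vf (Vfp : 'rV[R]_np -> R) (sigma : R) (b : nat) (x : state) : R :=
  Vfp x.1.1 + sigma * ((b%:R) ^+ 2 - (x.2%:~R) ^+ 2).

Definition inX (Xp : set 'rV[R]_np) (Up : set 'rV[R]_mp) (b : nat) (x : state) : Prop :=
  Xp x.1.1 /\ Up x.1.2 /\ (0 <= x.2 <= b%:Z).

Definition inU (Up : set 'rV[R]_mp) (u : input) : Prop :=
  Up u.1.1 /\ ~~ (u.1.2 && u.2).

Definition inXf (Xfp : set 'rV[R]_np) (Up : set 'rV[R]_mp) (b : nat) (x : state) : Prop :=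
  Xfp x.1.1 /\ Up x.1.2 /\ (0 <= x.2 <= b%:Z).

Fixpoint pred_traj (F : state -> input -> state) (x : state) (u : nat -> input)
  (i : nat) : state :=
  match i with
  | 0 => x
  | i'.+1 => F (pred_traj F x u i') (u i')
  end.

Definition ocp_admissible (F : state -> input -> state) (iX : state -> Prop)
  (iU : input -> Prop) (iXf : state -> Prop) (N : nat) (x : state)
  (u : nat -> input) : Prop :=
  (forall i, (i < N)%N -> iX (pred_traj F x u i) /\ iU (u i))
  /\ iXf (pred_traj F x u N).

Definition ocp_cost (F : state -> input -> state) (l : state -> input -> R)
  (Vt : state -> R) (N : nat) (x : state) (u : nat -> input) : R :=
  \sum_(i < N) l (pred_traj F x u i) (u i) + Vt (pred_traj F x u N).

Definition ocp_feasible F iX iU iXf N (x : state) : Prop :=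
  exists u, ocp_admissible F iX iU iXf N x u.

Definition ocp_optimal F iX iU iXf l Vt N (x : state) (u : nat -> input) : Prop :=
  ocp_admissible F iX iU iXf N x u /\
  forall u', ocp_admissible F iX iU iXf N x u' ->
    ocp_cost F l Vt N x u <= ocp_cost F l Vt N x u'.

(* closed loop generated by the rollout scheme: at each k = jM, whenever
   P(x(jM)) is feasible, ucl j is an optimizer u*(.|jM) of P(x(jM)), and
   u(jM+i) = u*(i|jM) is applied for i in [0, M-1]. *)
Definition closed_loop F iX iU iXf l Vt N M (xcl : nat -> state)
  (ucl : nat -> nat -> input) : Prop :=
  (forall j, ocp_feasible F iX iU iXf N (xcl (j * M)%N) ->
             ocp_optimal F iX iU iXf l Vt N (xcl (j * M)%N) (ucl j)) /\
  (forall j i, (i < M)%N ->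
     xcl (j * M + i.+1)%N = F (xcl (j * M + i)%N) (ucl j i)).

Definition eq_dist (b : nat) (x : state) : R :=
  `|x.1.1| + `|x.1.2| + `|((x.2 - b%:Z)%:~R : R)|.

End Setting.

(* The optimal cost at the rollout instants is a Lyapunov function.  From a
   state of X_f, sending k_p(x_p) once over the direct link and holding it for
   q - 1 steps is admissible, and by (A2) and (A4) costs at most V_f: the
   direct link consumes no tokens, so the bucket refills and the sigma-term of
   V_f pays for the token part of the stage cost.  Chaining r such blocks and
   appending them to the unused tail of the previous optimizer gives a
   candidate at the next rollout instant, so the optimal cost decreases by at
   least the cost of the M applied stages.  Hence the stage costs are summable
   and tend to 0, and small stage costs at two consecutive times force the
   state near (0,0,b).  Conversely, near (0,0,b) the state lies in X_f with
   small V_f, which bounds all later stage costs; this gives stability. *)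

From mathcomp Require Import all_boot all_order all_algebra.
From mathcomp Require Import all_classical all_reals all_analysis.
From mathcomp Require Import zify ring lra.
Import Order.TTheory GRing.Theory Num.Theory.
Import numFieldNormedType.Exports.
Local Open Scope ring_scope.
Local Open Scope classical_set_scope.

Set Implicit Arguments.
Unset Strict Implicit.
Unset Printing Implicit Defensive.

Section QuadraticForm.
Variables (R : realType) (n : nat) (Q : 'M[R]_n).

Lemma qfE (v : 'rV[R]_n) :
  qf Q v = \sum_(j < n) (\sum_(i < n) v 0 i * Q i j) * v 0 j.
Proof. by rewrite /qf !mxE; apply: eq_bigr => j _; rewrite !mxE. Qed.

Lemma continuous_qf : continuous (qf Q).
Proof.
have -> : qf Q = fun v => \sum_(j < n) (\sum_(i < n) v 0 i * Q i j) * v 0 j.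
  by apply: funext => v; rewrite qfE.
apply: continuous_big; first exact: add_continuous.
move=> j _ v; apply: continuousM; last exact: coord_continuous.
apply: continuous_big; first exact: add_continuous.
move=> i _ w; apply: continuousM; first exact: coord_continuous.
exact: cst_continuous.
Qed.

Lemma qfZ (t : R) (v : 'rV[R]_n) : qf Q (t *: v) = t ^+ 2 * qf Q v.
Proof. by rewrite /qf -!scalemxAl linearZ /= -scalemxAr !mxE expr2 mulrA. Qed.

Lemma qf0 : qf Q 0 = 0.
Proof. by rewrite /qf !mul0mx mxE. Qed.

Hypothesis posQ : posdef Q.

Lemma qf_ge0 (v : 'rV[R]_n) : 0 <= qf Q v.
Proof. by have [->|/posQ/ltW] := eqVneq v 0; rewrite ?qf0. Qed.

(* [qf Q] is bounded below by its positive minimum on the unit sphere,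
   times [`|v| ^+ 2]. *)
Lemma posdef_qf_small (eps : R) : 0 < eps ->
  exists2 eta : R, 0 < eta & forall v, qf Q v < eta -> `|v| < eps.
Proof.
move=> eps0; pose S := [set v : 'rV[R]_n | `|v| = 1].
have unitS v : v != 0 -> S (`|v|^-1 *: v).
  by move=> v0; rewrite /S /= normrZ normfV normr_id mulVf // normr_eq0.
have [[w Sw]|S0] := pselect (S !=set0); last first.
  exists 1 => // v _; have [->|v0] := eqVneq v 0; first by rewrite normr0.
  by case: S0; exists (`|v|^-1 *: v); exact: unitS.
have cS : compact S.
  apply: bounded_closed_compact.
    exists 1; split; first by rewrite num_real.
    by move=> x x1 v Sv; rewrite /= Sv ltW.
  have -> : S = (@Num.norm _ _) @^-1` [set 1] by [].
  apply: preimage_closed; last exact: closed_eq.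
  by move=> x _; exact: norm_continuous.
have [v0 Sv0 v0min] :=
  EVT_min_rV (ex_intro _ w Sw) cS (continuous_subspaceT continuous_qf).
rewrite inE in Sv0.
have v0_neq0 : v0 != 0.
  by apply: contra_eqN Sv0 => /eqP ->; rewrite normr0 eq_sym oner_eq0.
exists (qf Q v0 * eps ^+ 2); first by rewrite mulr_gt0 ?exprn_gt0 ?posQ.
move=> v; apply: contraTT; rewrite -!leNgt => epsv.
have v_gt0 : 0 < `|v| by apply: lt_le_trans epsv.
have v_neq0 : v != 0 by rewrite -normr_gt0.
rewrite -[v](scalerKV (lt0r_neq0 v_gt0)) qfZ [_ ^+ 2 * _]mulrC.
apply: ler_pM.
- exact/ltW/posQ.
- by rewrite exprn_ge0 // ltW.
- by apply: v0min; rewrite inE; exact: unitS.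
- by rewrite lerXn2r // ?nnegrE ltW.
Qed.

End QuadraticForm.

Lemma within_continuous_ball0 (R : realType) n (f : 'rV[R]_n -> R)
    (A : set 'rV[R]_n) :
  {within A, continuous f} -> A 0 -> forall eta : R, 0 < eta ->
  exists2 d : R, 0 < d & forall x, A x -> `|x| < d -> `|f x - f 0| < eta.
Proof.
move=> cf A0 eta eta0.
have /nbhs_ballP[e /= e0 fA] := (subspace_continuousP A f).1 cf 0 A0 _
  (nbhsx_ballx (f 0) eta eta0).
exists e => // x Ax xe; rewrite distrC.
by apply: fA Ax; rewrite -ball_normE /ball /= sub0r normrN.
Qed.

Lemma interior_setX_ball0 (R : realType) n m (A : set 'rV[R]_n)
    (B : set 'rV[R]_m) :
  interior (A `*` B) (0, 0) -> exists2 d : R, 0 < d &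
    forall x y, `|x| < d -> `|y| < d -> A x /\ B y.
Proof.
move=> [[P1 P2] /= [/nbhs_ballP[d1 d10 P1d1] /nbhs_ballP[d2 d20 P2d2]] PAB].
exists (Num.min d1 d2) => [|x y]; first by rewrite lt_min d10 d20.
rewrite !lt_min => /andP[x1 x2] /andP[y1 y2]; apply: (PAB (x, y)).
by split; [apply: P1d1 | apply: P2d2]; rewrite -ball_normE /ball /= sub0r normrN.
Qed.

Lemma intr_norm_lt1 (R : numDomainType) (z : int) : `|(z%:~R : R)| < 1 -> z = 0.
Proof.
rewrite -intr_norm -[1]/(1%:~R) ltr_int => z_lt1.
by apply/eqP; rewrite -normr_eq0; lia.
Qed.

Lemma nneg_bounded_sums_cvg0 (R : realType) (u : R ^nat) (C : R) :
  (forall k, 0 <= u k) -> (forall n, \sum_(k < n) u k <= C) ->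
  u @ \oo --> 0.
Proof.
move=> u_ge0 uC; apply: cvg_series_cvg_0; apply: nondecreasing_is_cvgn.
  by apply: nondecreasing_series => k _ _; exact: u_ge0.
by exists C => _ [k _ <-]; rewrite /series /= big_mkord.
Qed.

Section OptimalControlProblem.
Variables (R : realType) (np mp : nat).
Local Notation S := (state R np mp).
Local Notation I := (input R mp).
Variables (F : S -> I -> S) (l : S -> I -> R) (Vt : S -> R)
  (iX : S -> Prop) (iU : I -> Prop) (iXf : S -> Prop).
Local Notation traj := (pred_traj F).
Local Notation admissible := (ocp_admissible F iX iU iXf).
Local Notation cost := (ocp_cost F l Vt).

Definition concat_input (u : nat -> I) (n : nat) (v : nat -> I) : nat -> I :=
  fun i => if (i < n)%N then u i else v (i - n)%N.

Lemma traj_concat_le x u n v i : (i <= n)%N ->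
  traj x (concat_input u n v) i = traj x u i.
Proof.
by elim: i => [//|i IH] lt_in /=; rewrite IH ?(ltnW lt_in) // /concat_input lt_in.
Qed.

Lemma traj_concat_addn x u n v k :
  traj x (concat_input u n v) (n + k) = traj (traj x u n) v k.
Proof.
elim: k => [|k IH]; first by rewrite addn0 traj_concat_le.
by rewrite addnS /= IH /concat_input ltnNge leq_addr addKn.
Qed.

Lemma traj_addn x u n k :
  traj x u (n + k) = traj (traj x u n) (fun i => u (n + i)%N) k.
Proof. by elim: k => [|k IH]; rewrite ?addn0 // addnS /= IH. Qed.

Lemma admissible_concat n k x u v :
  (forall i, (i < n)%N -> iX (traj x u i) /\ iU (u i)) ->
  admissible k (traj x u n) v -> admissible (n + k) x (concat_input u n v).
Proof.
move=> u_ok [v_ok vXf]; split=> [i lt_ink|]; last by rewrite traj_concat_addn.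
have [lt_in|le_ni] := ltnP i n.
  by rewrite traj_concat_le ?(ltnW lt_in) // /concat_input lt_in; exact: u_ok.
rewrite -(subnKC le_ni) traj_concat_addn /concat_input ltnNge leq_addr addKn.
by apply: v_ok; rewrite -(ltn_add2l n) subnKC.
Qed.

Lemma cost_concat n k x u v :
  cost (n + k) x (concat_input u n v) =
  \sum_(i < n) l (traj x u i) (u i) + cost k (traj x u n) v.
Proof.
rewrite /ocp_cost big_split_ord /= addrA traj_concat_addn; congr (_ + _ + _).
  apply: eq_bigr => i _.
  by rewrite traj_concat_le ?(ltnW (ltn_ord i)) // /concat_input ltn_ord.
apply: eq_bigr => i _.
by rewrite traj_concat_addn /concat_input ltnNge leq_addr addKn.
Qed.

Lemma admissible_drop n k x u :
  admissible (n + k) x u -> admissible k (traj x u n) (fun i => u (n + i)%N).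
Proof.
move=> [u_ok uXf]; split; last by rewrite -traj_addn.
by move=> i lt_ik; rewrite -traj_addn; apply: u_ok; rewrite ltn_add2l.
Qed.

Lemma cost_drop n k x u :
  cost (n + k) x u = \sum_(i < n) l (traj x u i) (u i) +
                     cost k (traj x u n) (fun i => u (n + i)%N).
Proof.
rewrite /ocp_cost big_split_ord /= addrA traj_addn; congr (_ + _ + _).
by apply: eq_bigr => i _; rewrite traj_addn.
Qed.

Definition terminal_block (n : nat) : Prop :=
  forall x, iXf x -> exists w, admissible n x w /\ cost n x w <= Vt x.

Lemma terminal_block_mul q m : terminal_block q -> terminal_block (m * q).
Proof.
move=> Tq; elim: m => [|m IH] x xXf.
  by have [w _] := Tq x xXf; exists w; rewrite /ocp_cost mul0n big_ord0 add0r.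
have [w1 [[w1_ok w1Xf] w1_le]] := Tq x xXf.
have [w2 [w2_ok w2_le]] := IH _ w1Xf.
exists (concat_input w1 q w2); rewrite mulSn; split.
  exact: admissible_concat.
rewrite cost_concat; apply: le_trans w1_le.
by rewrite /ocp_cost lerD2l.
Qed.

End OptimalControlProblem.

Lemma divn_eq_elim (M : nat) (P : nat -> Prop) : (0 < M)%N ->
  (forall j i, (i < M)%N -> P (j * M + i)%N) -> forall k, P k.
Proof.
by move=> M_gt0 PM k; rewrite (divn_eq k M); apply: PM; rewrite ltn_pmod.
Qed.

Definition rollout_input (I : Type) (M : nat) (ucl : nat -> nat -> I) (k : nat) :
    I :=
  ucl (k %/ M)%N (k %% M)%N.

Lemma rollout_inputE (I : Type) (M : nat) (ucl : nat -> nat -> I) j i :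
  (i < M)%N -> rollout_input M ucl (j * M + i) = ucl j i.
Proof.
move=> lt_iM; have M_gt0 : (0 < M)%N by apply: leq_ltn_trans lt_iM.
by rewrite /rollout_input divnMDl // divn_small // addn0 modnMDl modn_small.
Qed.

Section Rollout.
Variables (R : realType) (np mp : nat).
Local Notation S := (state R np mp).
Local Notation I := (input R mp).
Variables (F : S -> I -> S) (l : S -> I -> R) (Vt : S -> R)
  (iX : S -> Prop) (iU : I -> Prop) (iXf : S -> Prop) (M J : nat) (d : S -> R).
Hypotheses (l_ge0 : forall x u, iX x -> iU u -> 0 <= l x u)
  (Vt_ge0 : forall x, iXf x -> 0 <= Vt x)
  (blockM : terminal_block F l Vt iX iU iXf M)
  (M_gt0 : (0 < M)%N) (J_gt0 : (0 < J)%N).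
Local Notation N := (J * M)%N.
Local Notation traj := (pred_traj F).
Local Notation admissible := (ocp_admissible F iX iU iXf).
Local Notation cost := (ocp_cost F l Vt).
Local Notation feasible := (ocp_feasible F iX iU iXf N).

Lemma ocp_cost_ge0 n x u : admissible n x u -> 0 <= cost n x u.
Proof.
move=> [u_ok uXf]; apply: addr_ge0; last exact: Vt_ge0.
by apply: sumr_ge0 => i _; have [] := u_ok i (ltn_ord i); exact: l_ge0.
Qed.

(* The candidate at the next rollout instant: the unused tail of [u]
   followed by an [M]-step terminal block. *)
Lemma rollout_candidate x u : admissible N x u ->
  exists u', admissible N (traj x u M) u' /\
    cost N (traj x u M) u' + \sum_(i < M) l (traj x u i) (u i) <= cost N x u.
Proof.
set k := (N - M)%N; have -> : N = (M + k)%N by rewrite subnKC // leq_pmull.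
move=> /admissible_drop[tail_ok tailXf]; have [w [w_ok w_le]] := blockM tailXf.
exists (concat_input (fun i => u (M + i)%N) k w); split.
  by rewrite addnC; exact: admissible_concat.
rewrite [cost _ x u]cost_drop addnC cost_concat.
by move: w_le; rewrite /ocp_cost; lra.
Qed.

Definition stage_controls (eps eta : R) : Prop :=
  forall x u u', iX x -> iU u -> iX (F x u) -> iU u' ->
    l x u < eta -> l (F x u) u' < eta -> d (F x u) < eps.

Section ClosedLoop.
Variables (xcl : nat -> S) (ucl : nat -> nat -> I).
Hypotheses (xcl_CL : closed_loop F iX iU iXf l Vt N M xcl ucl)
  (feasible0 : feasible (xcl 0%N)).
Local Notation u := (rollout_input M ucl).
Local Notation V j := (cost N (xcl (j * M)%N) (ucl j)).

Lemma closed_loop_traj j i : (i <= M)%N ->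
  xcl (j * M + i)%N = traj (xcl (j * M)%N) (ucl j) i.
Proof.
elim: i => [|i IH] lt_iM; first by rewrite addn0.
by rewrite xcl_CL.2 // IH ?(ltnW lt_iM).
Qed.

Lemma closed_loop_feasible j : feasible (xcl (j * M)%N).
Proof.
elim: j => [|j IH]; first by rewrite mul0n.
have [u' [u'_ok _]] := rollout_candidate (xcl_CL.1 j IH).1.
by exists u'; rewrite mulSnr closed_loop_traj.
Qed.

Lemma closed_loop_admissible j : admissible N (xcl (j * M)%N) (ucl j).
Proof. exact: (xcl_CL.1 j (closed_loop_feasible j)).1. Qed.

Lemma closed_loop_value_decrease j :
  V j.+1 + \sum_(i < M) l (xcl (j * M + i)%N) (ucl j i) <= V j.
Proof.
have [u' [u'_ok u'_le]] := rollout_candidate (closed_loop_admissible j).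
have opt := (xcl_CL.1 j.+1 (closed_loop_feasible j.+1)).2.
rewrite mulSnr closed_loop_traj // in opt *; apply: le_trans u'_le.
apply: lerD; first exact: opt.
by apply: ler_sum => i _; rewrite closed_loop_traj ?(ltnW (ltn_ord i)).
Qed.

Lemma closed_loop_step k : xcl k.+1 = F (xcl k) (u k).
Proof.
move: k; apply: (divn_eq_elim M_gt0) => j i lt_iM.
by rewrite rollout_inputE // -addnS xcl_CL.2.
Qed.

Lemma closed_loop_constraints k : iX (xcl k) /\ iU (u k).
Proof.
move: k; apply: (divn_eq_elim M_gt0) => j i lt_iM.
rewrite rollout_inputE // closed_loop_traj ?(ltnW lt_iM) //.
by apply: (closed_loop_admissible j).1; rewrite (leq_trans lt_iM) // leq_pmull.
Qed.

Lemma closed_loop_stage_ge0 k : 0 <= l (xcl k) (u k).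
Proof. by have [] := closed_loop_constraints k; exact: l_ge0. Qed.

Lemma closed_loop_stage_sum n : \sum_(k < n) l (xcl k) (u k) <= V 0.
Proof.
have blocks m : \sum_(k < m * M) l (xcl k) (u k) + V m <= V 0.
  elim: m => [|m IH]; first by rewrite mul0n big_ord0 add0r.
  rewrite mulSnr big_split_ord -addrA; apply: le_trans IH; rewrite lerD2l.
  have -> : \sum_(i < M) l (xcl (m * M + i)%N) (u (m * M + i)%N) =
            \sum_(i < M) l (xcl (m * M + i)%N) (ucl m i).
    by apply: eq_bigr => i _; rewrite rollout_inputE.
  by rewrite addrC -mulSnr; exact: closed_loop_value_decrease.
apply: le_trans (blocks n); apply: ler_wpDr.
  exact: ocp_cost_ge0 (closed_loop_admissible n).
have := nondecreasing_series (P := xpredT) (m := 0%N)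
  (fun k _ _ => closed_loop_stage_ge0 k) (leq_pmulr n M_gt0).
by rewrite !big_mkord.
Qed.

Lemma closed_loop_stage_le k : l (xcl k) (u k) <= V 0.
Proof.
apply: le_trans (closed_loop_stage_sum k.+1); rewrite big_ord_recr /= lerDr.
by apply: sumr_ge0 => i _; exact: closed_loop_stage_ge0.
Qed.

Lemma closed_loop_stage_cvg0 : (fun k => l (xcl k) (u k)) @ \oo --> 0.
Proof.
exact: nneg_bounded_sums_cvg0 closed_loop_stage_ge0 closed_loop_stage_sum.
Qed.

Lemma closed_loop_value0_le : iXf (xcl 0%N) -> V 0 <= Vt (xcl 0%N).
Proof.
move=> x0Xf; have [w [w_ok w_le]] := terminal_block_mul J blockM x0Xf.
by apply: le_trans w_le; exact: (xcl_CL.1 0%N feasible0).2 w w_ok.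
Qed.

Lemma closed_loop_dist_lt eps eta : stage_controls eps eta -> forall t,
  l (xcl t) (u t) < eta -> l (xcl t.+1) (u t.+1) < eta -> d (xcl t.+1) < eps.
Proof.
move=> ctl t; have [xX uU] := closed_loop_constraints t.
have [] := closed_loop_constraints t.+1; rewrite !closed_loop_step => FX u'U.
exact: ctl.
Qed.

End ClosedLoop.

Hypotheses (d_ge0 : forall x, 0 <= d x)
  (stage_controls_d : forall eps, 0 < eps ->
     exists2 eta, 0 < eta & stage_controls eps eta)
  (terminal_near : forall eta, 0 < eta -> exists2 delta, 0 < delta &
     forall x, d x < delta -> iXf x /\ Vt x < eta).

Lemma rollout_stable eps : 0 < eps -> exists delta : R, 0 < delta /\
  forall xcl ucl, closed_loop F iX iU iXf l Vt N M xcl ucl ->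
    feasible (xcl 0%N) -> d (xcl 0%N) < delta -> forall k, d (xcl k) < eps.
Proof.
move=> eps0; have [eta eta0 ctl] := stage_controls_d eps0.
have [delta delta0 near0] := terminal_near eta0.
exists (Num.min delta eps); split; first by rewrite lt_min delta0 eps0.
move=> xcl ucl xcl_CL feas0; rewrite lt_min => /andP[/near0[x0Xf Vt_lt] d0_lt].
have V0_lt := le_lt_trans (closed_loop_value0_le xcl_CL feas0 x0Xf) Vt_lt.
case=> [//|t]; apply: (closed_loop_dist_lt xcl_CL feas0 ctl);
  exact: le_lt_trans (closed_loop_stage_le xcl_CL feas0 _) V0_lt.
Qed.

Lemma rollout_attractive xcl ucl : closed_loop F iX iU iXf l Vt N M xcl ucl ->
  feasible (xcl 0%N) -> (fun k => d (xcl k)) @ \oo --> (0 : R).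
Proof.
move=> xcl_CL feas0; pose s k := l (xcl k) (rollout_input M ucl k).
have s_cvg : s @ \oo --> 0 := closed_loop_stage_cvg0 xcl_CL feas0.
have s1_cvg : [sequence s n.+1]_n @ \oo --> 0 by rewrite cvg_shiftS.
rewrite -(cvg_shiftS (fun k => d (xcl k))); apply/cvgrPdist_lt => eps eps0.
have [eta eta0 ctl] := stage_controls_d eps0.
near=> t; rewrite sub0r normrN ger0_norm; last exact: d_ge0.
apply: (closed_loop_dist_lt xcl_CL feas0 ctl); near: t.
  exact: cvgr_lt s_cvg _ eta0.
exact: cvgr_lt s1_cvg _ eta0.
Unshelve. all: by end_near.
Qed.

End Rollout.

Definition bucket_refill (g b : nat) (be : int) (i : nat) : int :=
  Num.min (be + i%:Z * g%:Z) b%:Z.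

Lemma bucket_refill0 (g b : nat) (be : int) :
  be <= b%:Z -> bucket_refill g b be 0 = be.
Proof. by rewrite /bucket_refill; lia. Qed.

Lemma bucket_refill_range (g b : nat) (be : int) i :
  0 <= be -> 0 <= bucket_refill g b be i <= b%:Z.
Proof. by rewrite /bucket_refill; lia. Qed.

Lemma sum_sqr_nat (R : comNzRingType) n :
  6 * \sum_(i < n) (i%:R : R) ^+ 2 = (n%:R - 1) * n%:R * (2 * n%:R - 1).
Proof.
elim: n => [|n IH]; first by rewrite big_ord0 !mulr0 mul0r.
by rewrite big_ord_recr /= mulrDr IH -natr1; ring.
Qed.

Lemma sqr_gap_ge0 (R : realDomainType) (b : nat) (be : int) :
  0 <= be <= b%:Z -> 0 <= (b%:R : R) ^+ 2 - (be%:~R) ^+ 2.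
Proof.
move=> /andP[be_ge0 be_le]; rewrite subr_ge0 lerXn2r ?nnegrE ?ler0n ?ler0z //.
by rewrite -[(b%:R : R)]/((b%:Z)%:~R) ler_int.
Qed.

Lemma sqr_gap_ge1 (R : realDomainType) (b : nat) (be : int) :
  0 <= be <= b%:Z -> be != b%:Z -> 1 <= (b%:R : R) ^+ 2 - (be%:~R) ^+ 2.
Proof.
move=> /andP[be_ge0 be_le] be_neq.
have : 1 <= b%:Z ^+ 2 - be ^+ 2.
  have be_lt : be < b%:Z by rewrite lt_neqAle be_neq.
  nia.
by rewrite -(ler_int R) rmorphB /= !rmorphXn.
Qed.

(* Unless the bucket is full it gains at least one token, so the right-hand
   side is at least [sigma], while (A4) bounds the left-hand side by [sigma]. *)
Lemma token_cost_le (R : realFieldType) (g b n : nat) (psi sigma : R) (be : int) :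
  (0 < g)%N -> (0 < n)%N -> (n * g <= b)%N -> 0 < psi -> 0 < sigma ->
  psi * (n.+1%:R * (b%:R) ^+ 2
         - 6^-1 * (g%:R) ^+ 2 * (n.+1%:R - 1) * (n.+1%:R - 2) * (2 * n.+1%:R - 3))
    <= sigma ->
  0 <= be <= b%:Z ->
  \sum_(i < n.+1) psi * ((b%:R) ^+ 2 - ((bucket_refill g b be i.-1)%:~R) ^+ 2)
    <= sigma * (((bucket_refill g b be n)%:~R) ^+ 2 - (be%:~R) ^+ 2).
Proof.
move=> g_gt0 n_gt0 ng_le psi_gt0 sigma_gt0 A4 /andP[be_ge0 be_le].
have [be_b|be_neq] := eqVneq be b%:Z.
  have full i : bucket_refill g b be i = b%:Z by rewrite /bucket_refill be_b; lia.
  rewrite big1 => [|i _]; last by rewrite full -[(b%:Z)%:~R]/(b%:R : R) subrr mulr0.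
  by rewrite full be_b subrr mulr0.
have gain : 1 <= ((bucket_refill g b be n)%:~R : R) ^+ 2 - (be%:~R) ^+ 2.
  have : be + 1 <= bucket_refill g b be n by rewrite /bucket_refill; lia.
  rewrite -(ler_int R) intrD => be1_le.
  have : (0 : R) <= be%:~R by rewrite ler0z.
  nra.
apply: le_trans (_ : sigma <= _); last by rewrite -[leLHS]mulr1 ler_pM2l.
apply: le_trans A4.
rewrite big_ord_recl /= bucket_refill0 // -mulr_sumr -mulrDr ler_pM2l //.
under eq_bigr do rewrite add0n.
have refill_ge (i : 'I_n) : ((i * g)%:R : R) <= (bucket_refill g b be i)%:~R.
  rewrite -[X in X <= _]/(((i * g)%N%:Z)%:~R) ler_int /bucket_refill.
  have := leq_mul (ltnW (ltn_ord i)) (leqnn g); lia.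
set s := \sum_(i < n) (i%:R : R) ^+ 2.
have tail_le : \sum_(i < n) ((b%:R : R) ^+ 2 - ((bucket_refill g b be i)%:~R) ^+ 2)
    <= n%:R * (b%:R) ^+ 2 - (g%:R) ^+ 2 * s.
  have -> : n%:R * (b%:R : R) ^+ 2 = \sum_(i < n) (b%:R : R) ^+ 2.
    by rewrite sumr_const card_ord mulr_natl.
  rewrite mulr_sumr -sumrB.
  apply: ler_sum => i _; rewrite lerD2l lerN2 -exprMn mulrC -natrM.
  by rewrite lerXn2r ?nnegrE ?ler0n ?(le_trans _ (refill_ge i)).
have s_eq : s = 6^-1 * ((n%:R - 1) * n%:R * (2 * n%:R - 1)).
  by rewrite -sum_sqr_nat mulKf ?pnatr_eq0.
have : (0 : R) <= be%:~R ^+ 2 by rewrite sqr_ge0.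
rewrite s_eq -natr1 in tail_le *; nra.
Qed.

Lemma ceil_div_pred_lt (c g : nat) : (0 < g)%N -> (0 < c)%N ->
  ((ceil_div c g).-1 * g < c)%N.
Proof.
move=> g_gt0 c_gt0; rewrite /ceil_div; set x : rat := c%:Q / g%:Q.
have ceil_ge0 : 0 <= Num.ceil x by rewrite ceil_ge0 (@lt_le_trans _ _ 0) ?divr_ge0.
have := ceilB1_lt x; rewrite -[Num.ceil x]gez0_abs //.
case: `|Num.ceil x|%N => [|k] /=; first by rewrite mul0n.
rewrite -[k.+1]addn1 PoszD addrK ltr_pdivlMr ?ltr0n // => lt_kgc.
by rewrite -(ltr_nat rat) natrM.
Qed.

Section TokenBucketSystem.
Variables (R : realType) (np mp : nat) (fp : 'rV[R]_np -> 'rV[R]_mp -> 'rV[R]_np)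
  (Xp : set 'rV[R]_np) (Up : set 'rV[R]_mp) (Q : 'M[R]_np) (Rm : 'M[R]_mp)
  (g c b : nat) (psi sigma : R) (Xfp : set 'rV[R]_np)
  (kp : 'rV[R]_np -> 'rV[R]_mp) (Vfp : 'rV[R]_np -> R).
Local Notation S := (state R np mp).
Local Notation F := (sys_f fp g c b).
Local Notation l := (stage Q Rm psi b).
Local Notation Vt := (Vf Vfp sigma b).
Local Notation iX := (inX Xp Up b).
Local Notation iU := (inU Up).
Local Notation iXf := (inXf Xfp Up b).

Lemma stageE (x : S) u : ~~ (u.1.2 && u.2) ->
  l x u = qf Q x.1.1 + qf Rm (F x u).1.2 + psi * ((b%:R) ^+ 2 - (x.2%:~R) ^+ 2).
Proof.
case: x => [[xp us] be]; case: u => [[uc [] []]] //= _;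
  by rewrite /sys_f /bR /= ?mulr1n ?add0r ?addr0 ?subr0 ?subrr ?scale1r ?scale0r
    ?addr0 ?add0r ?mul1r ?mul0r ?addr0 ?add0r.
Qed.

Lemma eq_dist_ge0 (x : S) : 0 <= eq_dist b x.
Proof. by rewrite /eq_dist !addr_ge0. Qed.

Hypotheses (posQ : posdef Q) (posR : posdef Rm) (psi_gt0 : 0 < psi).

Lemma stage_ge0 x u : iX x -> iU u -> 0 <= l x u.
Proof.
case: x => [[xp us] be] [_ [_ be_range]] [_ u_ok]; rewrite stageE //=.
rewrite !addr_ge0 ?(qf_ge0 posQ) ?(qf_ge0 posR) //.
exact: mulr_ge0 (ltW psi_gt0) (sqr_gap_ge0 _ be_range).
Qed.

(* A stage cost below [psi] forces a full bucket. *)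
Lemma stage_controls_eq_dist (eps : R) : 0 < eps ->
  exists2 eta, 0 < eta & stage_controls F l iX iU (eq_dist b) eps eta.
Proof.
move=> eps_gt0; have eps3_gt0 : 0 < eps / 3 by rewrite divr_gt0.
have [etaQ etaQ_gt0 smallQ] := posdef_qf_small posQ eps3_gt0.
have [etaR etaR_gt0 smallR] := posdef_qf_small posR eps3_gt0.
exists (Num.min (Num.min etaQ etaR) psi).
  by rewrite !lt_min etaQ_gt0 etaR_gt0.
move=> x u u' [_ [_ x_range]] [_ u_ok] [_ [_ y_range]] [_ u'_ok].
rewrite !lt_min => /andP[/andP[_ l_lt] _] /andP[/andP[l'_lt _] l'_psi].
rewrite stageE // in l_lt; rewrite stageE // in l'_lt l'_psi.
set y := F x u in y_range l_lt l'_lt l'_psi *.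
have := qf_ge0 posQ x.1.1; have := qf_ge0 posQ y.1.1.
have := qf_ge0 posR y.1.2; have := qf_ge0 posR (F y u').1.2.
have := mulr_ge0 (ltW psi_gt0) (sqr_gap_ge0 R x_range).
have := mulr_ge0 (ltW psi_gt0) (sqr_gap_ge0 R y_range).
move=> gy gx qRy' qRy qQy qQx.
have y_full : y.2 = b%:Z.
  apply/eqP; apply: contraTT l'_psi => y_neq; rewrite -leNgt.
  have := sqr_gap_ge1 R y_range y_neq; nra.
have /smallQ xp_small : qf Q y.1.1 < etaQ by lra.
have /smallR us_small : qf Rm y.1.2 < etaR by lra.
rewrite /eq_dist y_full subrr normr0 addr0; lra.
Qed.

Hypotheses (sigma_gt0 : 0 < sigma) (Vfp0 : Vfp 0 = 0)
  (Vfp_pos : forall xp, Xfp xp -> xp != 0 -> 0 < Vfp xp).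

Lemma Vf_ge0 x : iXf x -> 0 <= Vt x.
Proof.
case: x => [[xp us] be] [/= xpXf [_ be_range]]; rewrite /Vf /=.
apply: addr_ge0; last exact: mulr_ge0 (ltW sigma_gt0) (sqr_gap_ge0 R be_range).
by have [->|/(Vfp_pos xpXf)/ltW] := eqVneq xp 0; rewrite ?Vfp0.
Qed.

Hypotheses (Vfp_cont : {within Xfp, continuous Vfp}) (Xfp0 : Xfp 0)
  (int0 : interior (Xfp `*` Up) (0, 0)).

Lemma terminal_near_equilibrium (eta : R) : 0 < eta ->
  exists2 delta, 0 < delta & forall x, eq_dist b x < delta -> iXf x /\ Vt x < eta.
Proof.
move=> eta_gt0.
have [d1 d1_gt0 Vfp_near] := within_continuous_ball0 Vfp_cont Xfp0 eta_gt0.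
have [d2 d2_gt0 XU_near] := interior_setX_ball0 int0.
exists (Num.min (Num.min d1 d2) 1); first by rewrite !lt_min d1_gt0 d2_gt0 ltr01.
case=> [[xp us] be]; rewrite /eq_dist /= !lt_min.
move=> /andP[/andP[lt_d1 lt_d2] lt_1].
have := normr_ge0 xp; have := normr_ge0 us.
have := normr_ge0 ((be - b%:Z)%:~R : R) => be_ge0 us_ge0 xp_ge0.
have [xpXf usU] : Xfp xp /\ Up us by apply: XU_near; lra.
have be_full : be = b%:Z.
  by apply/eqP; rewrite -subr_eq0; apply/eqP/intr_norm_lt1; lra.
split; first by split=> //; split=> //=; rewrite be_full lexx andbT.
rewrite /Vf /= be_full subrr mulr0 addr0.
have := Vfp_near xp xpXf; rewrite Vfp0 subr0 => Vfp_lt.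
by apply: le_lt_trans (ler_norm _) (Vfp_lt _); lra.
Qed.

(* [kp xp] goes over the direct link at step 0 and is held afterwards. *)
Definition terminal_input (xp : 'rV[R]_np) (i : nat) : input R mp :=
  (kp xp, false, i == 0%N).

Lemma terminal_traj (x : S) j : 0 <= x.2 <= b%:Z ->
  pred_traj F x (terminal_input x.1.1) j.+1 =
  (fp_iter fp j.+1 x.1.1 (kp x.1.1), kp x.1.1, bucket_refill g b x.2 j).
Proof.
case: x => [[xp us] be] /= /andP[be_ge0 be_le]; elim: j => [|j IH].
  rewrite /= /sys_f /terminal_input /bR /= mulr1n add0r subr0 subrr scale1r.
  by rewrite scale0r addr0; congr (_, _, _); rewrite /bucket_refill; lia.
rewrite [LHS]/= IH /sys_f /terminal_input /bR /= add0r !subr0 scale0r add0r.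
by rewrite scale1r; congr (_, _, _); rewrite /bucket_refill; lia.
Qed.

Lemma terminal_stage (x : S) i : 0 <= x.2 <= b%:Z ->
  l (pred_traj F x (terminal_input x.1.1) i) (terminal_input x.1.1 i) =
  qf Q (fp_iter fp i x.1.1 (kp x.1.1)) + qf Rm (kp x.1.1)
  + psi * ((b%:R) ^+ 2 - ((bucket_refill g b x.2 i.-1)%:~R) ^+ 2).
Proof.
move=> x_range; rewrite stageE //.
rewrite -[F _ _]/(pred_traj F x (terminal_input x.1.1) i.+1) terminal_traj //=.
case: i => [|i]; last by rewrite terminal_traj.
by case/andP: x_range => _ /bucket_refill0 ->.
Qed.

Variable n : nat.
Hypotheses (g_gt0 : (0 < g)%N) (n_gt0 : (0 < n)%N) (ng_le_b : (n * g <= b)%N)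
  (A4 : psi * (n.+1%:R * (b%:R) ^+ 2
         - 6^-1 * (g%:R) ^+ 2 * (n.+1%:R - 1) * (n.+1%:R - 2) * (2 * n.+1%:R - 3))
    <= sigma)
  (Xfp_sub : Xfp `<=` Xp) (kpU : forall xp, Xfp xp -> Up (kp xp))
  (A1 : forall xp, Xfp xp ->
     (forall i, (1 <= i <= n)%N -> Xp (fp_iter fp i xp (kp xp))) /\
     Xfp (fp_iter fp n.+1 xp (kp xp)))
  (A2 : forall xp, Xfp xp ->
     Vfp (fp_iter fp n.+1 xp (kp xp)) - Vfp xp <=
       - (n.+1%:R * qf Rm (kp xp)) - \sum_(i < n.+1) qf Q (fp_iter fp i xp (kp xp))).

Lemma terminal_admissible x : iXf x ->
  ocp_admissible F iX iU iXf n.+1 x (terminal_input x.1.1).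
Proof.
case: x => [[xp us] be] [/= xpXf [usU be_range]].
have [A1_in A1_f] := A1 xpXf; have /andP[be_ge0 _] := be_range.
have kpU' : iU (kp xp, false, false) /\ iU (kp xp, false, true).
  by split; split=> //; exact: kpU.
split=> [[|j] lt_jn|].
- split; last by case: kpU'.
  by split; [exact: Xfp_sub | split].
- rewrite terminal_traj //; split; last by case: kpU'.
  by split; [apply: A1_in; lia | split; [exact: kpU | exact: bucket_refill_range]].
- rewrite terminal_traj //; split; first exact: A1_f.
  by split; [exact: kpU | exact: bucket_refill_range].
Qed.

Lemma terminal_cost_le x : iXf x ->
  ocp_cost F l Vt n.+1 x (terminal_input x.1.1) <= Vt x.
Proof.
move=> [xpXf [_ x_range]].
have VfE a v z : Vt (a, v, z) = Vfp a + sigma * ((b%:R) ^+ 2 - (z%:~R) ^+ 2) by [].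
set xp := x.1.1; set be := x.2.
pose fi i := fp_iter fp i xp (kp xp).
pose token (i : nat) :=
  psi * ((b%:R) ^+ 2 - ((bucket_refill g b be i.-1)%:~R) ^+ 2).
rewrite /ocp_cost; under eq_bigr => i _ do rewrite terminal_stage //.
have -> : \sum_(i < n.+1) (qf Q (fi i) + qf Rm (kp xp) + token i) =
    \sum_(i < n.+1) qf Q (fi i) + n.+1%:R * qf Rm (kp xp) + \sum_(i < n.+1) token i.
  by rewrite !big_split /= sumr_const card_ord mulr_natl.
rewrite terminal_traj // VfE.
have := A2 xpXf.
have := token_cost_le g_gt0 n_gt0 ng_le_b psi_gt0 sigma_gt0 A4 x_range.
rewrite /Vf -/xp -/be -/(fi n.+1); lra.
Qed.

Lemma terminal_block_succ : terminal_block F l Vt iX iU iXf n.+1.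
Proof.
by move=> x xXf; exists (terminal_input x.1.1); split;
  [exact: terminal_admissible | exact: terminal_cost_le].
Qed.
End TokenBucketSystem.
Theorem theorem3 (R : realType) (np mp : nat)
  (fp : 'rV[R]_np -> 'rV[R]_mp -> 'rV[R]_np)
  (Xp : set 'rV[R]_np) (Up : set 'rV[R]_mp)
  (Q : 'M[R]_np) (Rm : 'M[R]_mp)
  (g c b : nat) (psi : R)
  (Xfp : set 'rV[R]_np) (kp : 'rV[R]_np -> 'rV[R]_mp) (Vfp : 'rV[R]_np -> R)
  (sigma : R) (r J : nat) :
  let q := ceil_div c g in
  fp 0 0 = 0 ->
  closed Xp -> Xp 0 -> compact Up -> Up 0 ->
  posdef Q -> posdef Rm ->
  (1 <= g)%N -> (g <= c)%N -> (c <= b)%N -> (2 <= q)%N ->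
  0 < psi ->
  (* (A1) *)
  closed Xfp -> Xfp `<=` Xp -> Xfp 0 ->
  (forall xp, Xfp xp -> Up (kp xp)) ->
  (forall xp, Xfp xp ->
     (forall i, (1 <= i <= q.-1)%N -> Xp (fp_iter fp i xp (kp xp))) /\
     Xfp (fp_iter fp q xp (kp xp))) ->
  interior (Xfp `*` Up) (0, 0) ->
  (* (A2) *)
  {within Xfp, continuous Vfp} ->
  Vfp 0 = 0 -> (forall xp, Xfp xp -> xp != 0 -> 0 < Vfp xp) ->
  (forall xp, Xfp xp ->
     Vfp (fp_iter fp q xp (kp xp)) - Vfp xp <=
       - (q%:R * qf Rm (kp xp)) - \sum_(i < q) qf Q (fp_iter fp i xp (kp xp))) ->
  (* (A4) *)
  0 < sigma ->
  psi * (q%:R * (b%:R) ^+ 2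
         - 6^-1 * (g%:R) ^+ 2 * (q%:R - 1) * (q%:R - 2) * (2 * q%:R - 3))
    <= sigma ->
  (1 <= r)%N -> (1 <= J)%N ->
  let M := (r * q)%N in
  let N := (J * M)%N in
  let F := sys_f fp g c b in
  let iX := inX Xp Up b in
  let iU := inU Up in
  let iXf := inXf Xfp Up b in
  let l := stage Q Rm psi b in
  let Vt := Vf Vfp sigma b in
  let feas := ocp_feasible F iX iU iXf N in
  let CL := closed_loop F iX iU iXf l Vt N M in
  (* recursive feasibility *)
  (forall xcl ucl, CL xcl ucl -> feas (xcl 0%N) ->
     forall j, feas (xcl (j * M)%N)) /\
  (* stability of (0,0,b) *)
  (forall eps : R, 0 < eps -> exists del : R, 0 < del /\
     forall xcl ucl, CL xcl ucl -> feas (xcl 0%N) ->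
       eq_dist b (xcl 0%N) < del -> forall k, eq_dist b (xcl k) < eps) /\
  (* attractivity of (0,0,b) *)
  (forall xcl ucl, CL xcl ucl -> feas (xcl 0%N) ->
     (fun k => eq_dist b (xcl k)) @ \oo --> (0 : R)).
Proof.
move=> q _ _ _ _ _ posQ posR g_gt0 g_le_c c_le_b q_ge2 psi_gt0 _ Xfp_sub Xfp0
  kpU A1 int0 Vfp_cont Vfp0 Vfp_pos A2 sigma_gt0 A4 r_gt0 J_gt0
  M N F iX iU iXf l Vt feas CL.
have qE : q = q.-1.+1 by rewrite prednK // ltnW.
have q1_gt0 : (0 < q.-1)%N by rewrite -ltnS -qE.
have q1g_le_b : (q.-1 * g <= b)%N.
  by rewrite ltnW // (leq_trans (ceil_div_pred_lt g_gt0 (leq_trans g_gt0 g_le_c))).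
have blockq : terminal_block F l Vt iX iU iXf q.
  move: A1 A2 A4; rewrite qE => A1 A2 A4.
  have := terminal_block_succ c psi_gt0 sigma_gt0 g_gt0 q1_gt0 q1g_le_b A4
    Xfp_sub kpU A1 A2.
  exact.
have blockM : terminal_block F l Vt iX iU iXf M := terminal_block_mul r blockq.
have M_gt0 : (0 < M)%N by rewrite muln_gt0 r_gt0 (leq_trans _ q_ge2).
have l_ge0 : forall x u, iX x -> iU u -> 0 <= l x u :=
  stage_ge0 fp g c posQ posR psi_gt0.
have Vt_ge0 : forall x, iXf x -> 0 <= Vt x := Vf_ge0 sigma_gt0 Vfp0 Vfp_pos.
have controls := stage_controls_eq_dist fp Xp Up g c b posQ posR psi_gt0.
have near := terminal_near_equilibrium b sigma Vfp0 Vfp_cont Xfp0 int0.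
split; first exact: closed_loop_feasible blockM J_gt0.
split; first exact: rollout_stable l_ge0 Vt_ge0 blockM M_gt0 J_gt0 controls near.
have d_ge0 : forall x : state R np mp, 0 <= eq_dist b x := eq_dist_ge0 b.
exact: rollout_attractive l_ge0 Vt_ge0 blockM M_gt0 J_gt0 d_ge0 controls.
Qed.
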